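(* Let $n$, $k$, $t$ be positive integers with $t\geq 2$, $k\geq t+2$ and $n\geq 2k+t+\delta_{2,q}$, and set $$h(n,k,t)={n-t\brack k-t}-q^{(k-t+1)(k-t)}{n-k-1\brack k-t}+2.$$ Then $h(n,k,t)>\frac{47}{48}{k-t+1\brack 1}{n-t-1\brack k-t-1}$.
   Context: $q$ is a prime power and ${m\brack r}$ denotes the Gaussian binomial coefficient $\prod_{i=0}^{r-1}\frac{q^{m-i}-1}{q^{r-i}-1}$ (equal to $1$ for $r=0$). $\delta_{a,b}$ is the Kronecker delta. (The quantity $h(n,k,t)$ equals the size of the family $\{F\in{V\brack k}: E\subseteq F,\ \dim(F\cap U_2)\geq t\}\cup\{U_1,U_2\}$ for $U_1,U_2\in{V\brack k}$, $E\in{U_1\brack t}$ with $U_1\cap U_2\in{E\brack t-1}$, where $\dim V=n$.) *)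

From mathcomp Require Import all_boot all_order all_algebra.
Set Implicit Arguments. Unset Strict Implicit. Unset Printing Implicit Defensive.
Import Order.TTheory GRing.Theory Num.Theory.
Local Open Scope ring_scope.

Definition prime_power (q : nat) : Prop :=
  exists p e : nat, prime p /\ (0 < e)%N /\ q = (p ^ e)%N.

Definition gbin (q m r : nat) : rat :=
  \prod_(i < r) (((q%:R : rat) ^+ (m - i) - 1) / ((q%:R : rat) ^+ (r - i) - 1)).

Definition h (q n k t : nat) : rat :=
  gbin q (n - t) (k - t)
  - (q%:R : rat) ^+ ((k - t + 1) * (k - t)) * gbin q (n - k - 1) (k - t) + 2.

(* Write a = k - t and N = n - t. Then q^((a+1)a) [N-a-1, a] = [N, a] prod_(i<a) (1 - u_i)
   with u_i = (q^(a+1) - 1)/(q^(N-i) - 1) >= c q^i, where c = (q^(a+1) - 1)/(q^N - 1).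
   The second-order Bonferroni bound prod (1 - v_i) <= 1 - sum v_i + sum_(j<i) v_i v_j,
   evaluated on the geometric sequence v_i = c q^i, gives
     h - 2 >= [a+1, 1] [N-1, a-1] (1 - rho),
     rho = (q^(a+1) - 1)(q^a - q) / ((q^N - 1)(q^2 - 1)),
   and N >= 2a + 4 + delta_(2,q) makes rho <= 1/48. *)

From mathcomp Require Import all_boot all_order all_algebra.
From mathcomp Require Import ring lra zify.
Set Implicit Arguments. Unset Strict Implicit. Unset Printing Implicit Defensive.
Import Order.TTheory GRing.Theory Num.Theory.
Local Open Scope ring_scope.

Lemma bonferroni_prod_le (R : realFieldType) (v : nat -> R) (a : nat) :
  (forall i, (i < a)%N -> 0 <= v i <= 1) ->
  \prod_(i < a) (1 - v i) <= 1 - \sum_(i < a) v i + \sum_(i < a) v i * \sum_(j < i) v j.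
Proof.
elim: a => [|a IH] v01; first by rewrite !big_ord0; lra.
have /andP[va_ge0 va_le1] := v01 a (ltnSn a).
have v_ge0 i : (i < a)%N -> 0 <= v i.
  by move=> lt_ia; have /andP[] := v01 i (ltnW lt_ia).
have := IH (fun i lt_ia => v01 i (ltnW lt_ia)).
rewrite !big_ord_recr /=.
set P := \prod_(i < a) _; set S := \sum_(i < a) v i; set T := \sum_(i < a) _ => P_le.
have T_ge0 : 0 <= T.
  apply: sumr_ge0 => i _; apply: mulr_ge0; first exact: v_ge0.
  by apply: sumr_ge0 => j _; apply: v_ge0 (ltn_trans (ltn_ord j) (ltn_ord i)).
have : P * (1 - v a) <= (1 - S + T) * (1 - v a) by apply: ler_wpM2r; lra.
have := mulr_ge0 T_ge0 va_ge0; lra.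
Qed.

Lemma sum_geom_pairs (R : comPzRingType) (x : R) (a : nat) :
  (x - 1) * (x ^+ 2 - 1) * \sum_(i < a) x ^+ i * \sum_(j < i) x ^+ j
  = (x ^+ a - 1) * (x ^+ a - x).
Proof.
elim: a => [|a IH]; first by rewrite big_ord0 expr0 subrr !mulr0 mul0r.
rewrite big_ord_recr /= mulrDr IH.
have -> : (x - 1) * (x ^+ 2 - 1) * (x ^+ a * \sum_(j < a) x ^+ j)
          = (x ^+ 2 - 1) * x ^+ a * ((x - 1) * \sum_(j < a) x ^+ j) by ring.
by rewrite -subrX1 [x ^+ a.+1]exprS; ring.
Qed.

Section QBinomial.
Variable R : realFieldType.

Definition qbinom (x : R) (m r : nat) : R :=
  \prod_(i < r) ((x ^+ (m - i) - 1) / (x ^+ (r - i) - 1)).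

Lemma qbinom1 x m : qbinom x m 1 = (x ^+ m - 1) / (x - 1).
Proof. by rewrite /qbinom big_ord1 !subn0 expr1. Qed.

Lemma qbinomS x m r :
  qbinom x m r.+1 = (x ^+ m - 1) / (x ^+ r.+1 - 1) * qbinom x m.-1 r.
Proof.
rewrite /qbinom big_ord_recl !subn0; congr (_ * _); apply: eq_bigr => i _.
by congr ((_ ^+ _ - 1) / (_ ^+ _ - 1)); rewrite lift0; lia.
Qed.

Variable x : R.
Hypothesis x_gt1 : 1 < x.

Lemma exprn_subr1_gt0 n : (0 < n)%N -> 0 < x ^+ n - 1.
Proof. by move=> n_gt0; rewrite subr_gt0 exprn_egt1 // -lt0n. Qed.

Lemma qbinom_gt0 m r : (r <= m)%N -> 0 < qbinom x m r.
Proof.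
move=> le_rm; apply: prodr_gt0 => i _.
by apply: divr_gt0; apply: exprn_subr1_gt0; have := ltn_ord i; lia.
Qed.

Lemma qbinom_shift m r : (2 * r <= m)%N ->
  x ^+ ((r + 1) * r) * qbinom x (m - r - 1) r
  = qbinom x m r * \prod_(i < r) (1 - (x ^+ r.+1 - 1) / (x ^+ (m - i) - 1)).
Proof.
move=> le_2r_m.
have -> : x ^+ ((r + 1) * r) = \prod_(i < r) x ^+ r.+1.
  by rewrite prodr_const card_ord -exprM addn1.
rewrite /qbinom -!big_split /=.
apply: eq_bigr => i _; have lt_ir := ltn_ord i.
have den_r : 0 < x ^+ (r - i) - 1 by apply: exprn_subr1_gt0; lia.
have den_m : 0 < x ^+ (m - i) - 1 by apply: exprn_subr1_gt0; lia.
have splitX : x ^+ (m - i) = x ^+ (m - r - 1 - i) * x ^+ r.+1.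
  by rewrite -exprD; congr (_ ^+ _); lia.
rewrite splitX in den_m *.
by field; rewrite !gt_eqF.
Qed.

Lemma geom_ratio_bounds i j m : (0 < j)%N -> (i + j <= m)%N ->
  (x ^+ j - 1) / (x ^+ m - 1) * x ^+ i <= (x ^+ j - 1) / (x ^+ (m - i) - 1) <= 1.
Proof.
move=> j_gt0 le_ijm.
have num_gt0 : 0 < x ^+ j - 1 := exprn_subr1_gt0 j_gt0.
have den_gt0 : 0 < x ^+ (m - i) - 1 by apply: exprn_subr1_gt0; lia.
have dm_gt0 : 0 < x ^+ m - 1 by apply: exprn_subr1_gt0; lia.
apply/andP; split.
- rewrite mulrAC ler_pdivrMr // mulrAC ler_pdivlMr //.
  have -> : x ^+ m = x ^+ i * x ^+ (m - i) by rewrite -exprD; congr (_ ^+ _); lia.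
  have xi_ge1 : 0 <= x ^+ i - 1 by rewrite subr_ge0 exprn_ege1 // ltW.
  rewrite -subr_ge0 (_ : _ - _ = (x ^+ j - 1) * (x ^+ i - 1)); last by ring.
  exact: mulr_ge0 (ltW num_gt0) xi_ge1.
- by rewrite ler_pdivrMr // mul1r lerD2r ler_eXn2l //; lia.
Qed.

Lemma prod_ratio_le N a : (2 * a <= N)%N ->
  let c := (x ^+ a.+1 - 1) / (x ^+ N - 1) in
  \prod_(i < a) (1 - (x ^+ a.+1 - 1) / (x ^+ (N - i) - 1))
  <= 1 - c * \sum_(i < a) x ^+ i + c ^+ 2 * \sum_(i < a) x ^+ i * \sum_(j < i) x ^+ j.
Proof.
move=> le_2a_N /=; set c := (x ^+ a.+1 - 1) / (x ^+ N - 1); pose v i := c * x ^+ i.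
have c_ge0 : 0 <= c by rewrite divr_ge0 // subr_ge0 exprn_ege1 // ltW.
have v_ge0 i : 0 <= v i by rewrite mulr_ge0 // exprn_ge0 // ltW // (lt_trans ltr01).
have v_bounds i : (i < a)%N ->
    0 <= 1 - (x ^+ a.+1 - 1) / (x ^+ (N - i) - 1) <= 1 - v i.
  move=> lt_ia; have /andP[] := @geom_ratio_bounds i a.+1 N isT ltac:(lia).
  by rewrite subr_ge0 lerD2l lerN2 => -> ->.
have v01 i : (i < a)%N -> 0 <= v i <= 1.
  by move=> /v_bounds /andP[? ?]; apply/andP; split; [exact: v_ge0 | lra].
have prod_le : \prod_(i < a) (1 - (x ^+ a.+1 - 1) / (x ^+ (N - i) - 1))
    <= \prod_(i < a) (1 - v i) by apply: ler_prod => i _; apply: v_bounds.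
have sumE : \sum_(i < a) v i = c * \sum_(i < a) x ^+ i by rewrite big_distrr.
have pairsE : \sum_(i < a) v i * \sum_(j < i) v j
              = c ^+ 2 * \sum_(i < a) x ^+ i * \sum_(j < i) x ^+ j.
  by rewrite big_distrr; apply: eq_bigr => i _; rewrite /v -big_distrr /=; ring.
apply: (le_trans prod_le); rewrite -sumE -pairsE; exact: bonferroni_prod_le.
Qed.

Lemma qbinom_gap_ge N a : (0 < a)%N -> (2 * a <= N)%N ->
  qbinom x (a + 1) 1 * qbinom x (N - 1) (a - 1)
    * (1 - (x ^+ a.+1 - 1) * (x ^+ a - x) / ((x ^+ N - 1) * (x ^+ 2 - 1)))
  <= qbinom x N a - x ^+ ((a + 1) * a) * qbinom x (N - a - 1) a.
Proof.
move=> a_gt0 le_2a_N.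
have x1_gt0 : 0 < x - 1 by rewrite subr_gt0.
have x2_gt0 : 0 < x ^+ 2 - 1 by exact: exprn_subr1_gt0.
have xa_gt0 : 0 < x ^+ a - 1 := exprn_subr1_gt0 a_gt0.
have xN_gt0 : 0 < x ^+ N - 1 by apply: exprn_subr1_gt0; lia.
have G_gt0 : 0 < qbinom x (N - 1) (a - 1) by apply: qbinom_gt0; lia.
have qbinomN : qbinom x N a = (x ^+ N - 1) / (x ^+ a - 1) * qbinom x (N - 1) (a - 1).
  by case: a a_gt0 {le_2a_N xa_gt0 G_gt0} => // a _; rewrite qbinomS subn1 subSS subn0.
have geomE : \sum_(i < a) x ^+ i = (x ^+ a - 1) / (x - 1).
  by rewrite subrX1 mulrC mulKf // gt_eqF.
have pairE : \sum_(i < a) x ^+ i * \sum_(j < i) x ^+ j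
             = (x ^+ a - 1) * (x ^+ a - x) / ((x - 1) * (x ^+ 2 - 1)).
  by rewrite -sum_geom_pairs mulrC mulKf // mulf_neq0 // gt_eqF.
have := prod_ratio_le le_2a_N; rewrite /= geomE pairE.
rewrite qbinom_shift // qbinomN qbinom1 addn1.
set P := \prod_(i < a) _; set G := qbinom x _ _ in G_gt0 *.
set z := x ^+ a.+1; set X := x ^+ a in xa_gt0 *; set Y := x ^+ N in xN_gt0 *.
set c := (z - 1) / (Y - 1) => P_le.
have B_ge0 : 0 <= (Y - 1) / (X - 1) by rewrite divr_ge0 // ltW.
have key : (z - 1) / (x - 1) * (1 - (z - 1) * (X - x) / ((Y - 1) * (x ^+ 2 - 1)))
  = (Y - 1) / (X - 1)
    * (c * ((X - 1) / (x - 1)) - c ^+ 2 * ((X - 1) * (X - x) / ((x - 1) * (x ^+ 2 - 1)))).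
  by rewrite /c; field; rewrite !gt_eqF.
have gap_le : c * ((X - 1) / (x - 1))
    - c ^+ 2 * ((X - 1) * (X - x) / ((x - 1) * (x ^+ 2 - 1))) <= 1 - P by lra.
have bound := ler_wpM2r (ltW G_gt0) (ler_wpM2l B_ge0 gap_le).
by rewrite mulrAC key; lra.
Qed.

Lemma qbinom_gap_gt N a : (0 < a)%N -> (2 * a <= N)%N ->
  48 * (x ^+ a.+1 - 1) * (x ^+ a - x) <= (x ^+ 2 - 1) * (x ^+ N - 1) ->
  47 / 48 * qbinom x (a + 1) 1 * qbinom x (N - 1) (a - 1)
  < qbinom x N a - x ^+ ((a + 1) * a) * qbinom x (N - a - 1) a + 2.
Proof.
move=> a_gt0 le_2a_N numer_le.
have AG_ge0 : 0 <= qbinom x (a + 1) 1 * qbinom x (N - 1) (a - 1).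
  by rewrite mulr_ge0 // ltW // qbinom_gt0 //; lia.
have ratio_le : (x ^+ a.+1 - 1) * (x ^+ a - x) / ((x ^+ N - 1) * (x ^+ 2 - 1)) <= 1 / 48.
  rewrite ler_pdivrMr; first lra.
  by rewrite mulr_gt0 // exprn_subr1_gt0 //; lia.
have := ler_wpM2l AG_ge0 ratio_le.
have := qbinom_gap_ge a_gt0 le_2a_N.
lra.
Qed.
End QBinomial.

Lemma gap_bound_q2 (R : realFieldType) (X Y : R) :
  1 <= X -> 2 ^+ 5 * X ^+ 2 <= Y -> 48 * (2 * X - 1) * (X - 2) <= (2 ^+ 2 - 1) * (Y - 1).
Proof. by nra. Qed.

Lemma gap_bound_q_ge3 (R : realFieldType) (x X Y : R) :
  3 <= x -> x <= X -> x ^+ 4 * X ^+ 2 <= Y ->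
  48 * (x * X - 1) * (X - x) <= (x ^+ 2 - 1) * (Y - 1).
Proof.
move=> x_ge3 le_xX le_Y.
have x2_ge9 : 9 <= x ^+ 2 by nra.
have x4_ge : 27 * x <= x ^+ 4 by rewrite (_ : x ^+ 4 = x ^+ 3 * x); [nra | ring].
have xX2_ge0 : 0 <= x * X ^+ 2 by nra.
by nra.
Qed.

Lemma gap_bound (R : realFieldType) (q a N : nat) :
  (2 <= q)%N -> (0 < a)%N -> (2 * a + 4 + (q == 2%N) <= N)%N ->
  48 * ((q%:R : R) ^+ a.+1 - 1) * (q%:R ^+ a - q%:R) <= (q%:R ^+ 2 - 1) * (q%:R ^+ N - 1).
Proof.
move=> q_ge2 a_gt0 le_N.
have q_gt1 : 1 < (q%:R : R) by rewrite ltr1n.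
have le_pow m n : (m <= n)%N -> (q%:R : R) ^+ m <= q%:R ^+ n by rewrite ler_eXn2l.
rewrite exprS; case: (eqVneq q 2%N) le_N le_pow => [-> | q_ne2] le_N le_pow.
- apply: gap_bound_q2; first by rewrite exprn_ege1 // ler1n.
  by rewrite -exprM -exprD le_pow //; lia.
- apply: gap_bound_q_ge3.
  + by rewrite ler_nat ltn_neqAle eq_sym q_ne2.
  + by rewrite -{1}[q%:R]expr1 le_pow //; lia.
  + by rewrite -exprM -exprD le_pow //; lia.
Qed.

Lemma prime_power_ge2 q : prime_power q -> (2 <= q)%N.
Proof.
case=> p [e [p_pr [e_gt0 ->]]]; apply: leq_trans (prime_gt1 p_pr) _.
by rewrite -[X in (X <= _)%N]expn1 leq_exp2l // prime_gt1.
Qed.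

Lemma gbinE q m r : gbin q m r = qbinom (q%:R : rat) m r.
Proof. by []. Qed.

Theorem lemma2p6 (q n k t : nat) :
  prime_power q ->
  (0 < n)%N -> (0 < k)%N -> (0 < t)%N ->
  (2 <= t)%N -> (t + 2 <= k)%N ->
  (2 * k + t + (q == 2%N) <= n)%N ->
  h q n k t > (47%:R / 48%:R) * gbin q (k - t + 1) 1 * gbin q (n - t - 1) (k - t - 1).
Proof.
move=> q_pp _ _ _ t_ge2 le_tk le_n.
have q_ge2 := prime_power_ge2 q_pp.
rewrite /h !gbinE (_ : (n - k - 1 = n - t - (k - t) - 1)%N); last by lia.
apply: qbinom_gap_gt; [by rewrite ltr1n | lia | lia |].
by apply: gap_bound => //; move: le_n; case: (q == 2%N) => /=; lia.
Qed.
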